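(* Let $\mathcal{A}$ be a finite nonempty set of positive integers, let $k\ge 1$ be an integer and let $k_1\ge k_2\ge 1$ be real numbers with $k+1>k_2$. Set $X=\max\mathcal{A}$, $z=X^{1/k_1}$, $y=X^{1/k_2}$ and $\lambda=k+1-k_2$. Suppose that for some constants $c>0$ and $0<\delta<1$, $$\sum_{\substack{p\text{ prime}\\ z\le p<y}}|\mathcal{A}_{p^2}|\le c|\mathcal{A}|^{1-\delta}.$$ Then $$r_k(\mathcal{A})\ge \frac{\lambda}{k}S(\mathcal{A},z)-\frac1k\sum_{\substack{p\text{ prime}\\ z\le p<y}}\left(1-\frac{\log p}{\log y}\right)S(\mathcal{A}_p,z)-\frac{\lambda c}{k}|\mathcal{A}|^{1-\delta}.$$
   Context: All $p$ denote primes. For a positive integer $d$ and a finite set $\mathcal{B}$ of positive integers, $\mathcal{B}_d=\{b\in\mathcal{B}: d\mid b\}$. $P(z)=\prod_{p<z}p$, and $S(\mathcal{B},z)=\#\{b\in\mathcal{B}:\gcd(b,P(z))=1\}$. $r_k(\mathcal{A})=\#\{a\in\mathcal{A}:\Omega(a)\le k\}$, where $\Omega(a)$ is the number of prime factors of $a$ counted with multiplicity. *)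

From Stdlib Require Import Reals.
From mathcomp Require Import all_boot.

Set Implicit Arguments.
Unset Strict Implicit.
Unset Printing Implicit Defensive.

Definition Rlt_bool (x y : R) : bool := if Rlt_dec x y then true else false.
Definition Rle_bool (x y : R) : bool := if Rle_dec x y then true else false.

(* Finite sets of positive integers are represented by duplicate-free lists. *)

Definition multiples (d : nat) (B : seq nat) : seq nat := [seq b <- B | d %| b].

(* an upper bound (in nat) for reals: every p with INR p < z satisfies p < ubound z *)
Definition ubound (z : R) : nat := Z.to_nat (up z).

Definition Pz (z : R) : nat :=
  \prod_(p <- index_iota 0 (ubound z) | prime p && Rlt_bool (INR p) z) p.

Definition Ssieve (B : seq nat) (z : R) : nat :=
  count (fun b => gcdn b (Pz z) == 1) B.

Definition bigOmega (a : nat) : nat := \sum_(p <- primes a) logn p a.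

Definition rk (k : nat) (A : seq nat) : nat := count (fun a => bigOmega a <= k) A.

Definition sum_primes_between (z y : R) (f : nat -> R) : R :=
  \big[Rplus/R0]_(p <- index_iota 0 (ubound y)
                    | prime p && Rle_bool z (INR p) && Rlt_bool (INR p) y) f p.

From Stdlib Require Import Reals Lra Lia.
From HB Require Import structures.
From mathcomp Require Import all_boot.
Open Scope R_scope.

Set Implicit Arguments.
Unset Strict Implicit.

(* For each a in A let
     w(a) = [a sifted] (lam - sum_(z <= p < y, p | a) (1 - log p / log y)).
   Exchanging the sums over a and p, k times the right-hand side of the theorem
   equals sum_a w(a) - lam c |A|^(1-delta), so by the hypothesis it suffices to show
     w(a) <= k [Omega(a) <= k] + lam #{z <= p < y : p^2 | a}.
   This is clear when a is not sifted, when Omega(a) <= k (then w(a) <= lam <= k),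
   or when some p^2 | a.  Otherwise every prime factor of a is >= z, those below
   y occur exactly once and those >= y have nonpositive weight, so
     sum_(p | a, p < y) (1 - log p / log y) >= sum_(p | a) v_p(a) (1 - log p / log y)
                                          = Omega(a) - log a / log y >= k + 1 - k2,
   using a <= X = y^k2; hence w(a) <= 0. *)

Lemma Rplus_assoc_law : associative Rplus.
Proof. by move=> x y t; rewrite Rplus_assoc. Qed.

HB.instance Definition _ :=
  Monoid.isComLaw.Build R R0 Rplus Rplus_assoc_law Rplus_comm Rplus_0_l.
HB.instance Definition _ := Monoid.isMulLaw.Build R R0 Rmult Rmult_0_l Rmult_0_r.
HB.instance Definition _ :=
  Monoid.isAddLaw.Build R Rmult Rplus Rmult_plus_distr_r Rmult_plus_distr_l.

Section RealSums.

Variables (I : Type) (r : seq I) (P : pred I).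

Lemma big_Rle (F G : I -> R) :
  (forall i, P i -> F i <= G i) ->
  \big[Rplus/R0]_(i <- r | P i) F i <= \big[Rplus/R0]_(i <- r | P i) G i.
Proof. by move=> FG; apply: (big_ind2 Rle) => *; [lra | lra | exact: FG]. Qed.

Lemma big_Rge0 (F : I -> R) :
  (forall i, P i -> 0 <= F i) -> 0 <= \big[Rplus/R0]_(i <- r | P i) F i.
Proof. by move=> F0; apply: (big_ind (Rle 0)) => *; [lra | lra | exact: F0]. Qed.

Lemma INR_count (Q : pred I) :
  INR (count Q r) = \big[Rplus/R0]_(i <- r) INR (Q i).
Proof. by elim: r => [|i s IH]; rewrite ?big_nil ?big_cons //= plus_INR IH. Qed.

Lemma INR_sum (F : I -> nat) :
  INR (\sum_(i <- r | P i) F i)%N = \big[Rplus/R0]_(i <- r | P i) INR (F i).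
Proof. exact: (big_morph INR plus_INR). Qed.

End RealSums.

Lemma big_Rle_diff (I : eqType) (r : seq I) (F1 F2 G1 G2 : I -> R) :
  (forall i, i \in r -> F1 i - F2 i <= G1 i + G2 i) ->
  \big[Rplus/R0]_(i <- r) F1 i - \big[Rplus/R0]_(i <- r) F2 i
    <= \big[Rplus/R0]_(i <- r) G1 i + \big[Rplus/R0]_(i <- r) G2 i.
Proof.
elim: r => [|i s IH] FG; rewrite ?big_nil ?big_cons; first lra.
have := FG i (mem_head i s).
by have := IH (fun j js => FG j (@mem_behead _ (i :: s) j js)); lra.
Qed.

Lemma big_Rle_term (I : eqType) (r : seq I) (P : pred I) (F : I -> R) (x : I) :
  x \in r -> P x -> (forall i, P i -> 0 <= F i) ->
  F x <= \big[Rplus/R0]_(i <- r | P i) F i.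
Proof.
move=> xr Px F0; rewrite (big_rem x) //= Px.
by have := @big_Rge0 _ (rem x r) P F F0; lra.
Qed.

Lemma INR_expn (m n : nat) : INR (m ^ n)%N = INR m ^ n.
Proof. by elim: n => [|n IH] //=; rewrite expnS mult_INR IH. Qed.

Lemma ln_nat_prime_decomp (a : nat) : (0 < a)%N ->
  ln (INR a) = \big[Rplus/R0]_(p <- primes a) (INR (logn p a) * ln (INR p)).
Proof.
move=> a_gt0; rewrite {1}(prod_prime_decomp a_gt0) prime_decompE big_map /=.
rewrite big_seq [in RHS]big_seq.
pose K (n : nat) (l : R) := (0 < n)%N /\ ln (INR n) = l.
suff [] : K (\prod_(p <- primes a | p \in primes a) p ^ logn p a)%N
            (\big[Rplus/R0]_(p <- primes a | p \in primes a)
               (INR (logn p a) * ln (INR p))) by [].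
apply: big_ind2 => [|n1 l1 n2 l2 [n1_gt0 <-] [n2_gt0 <-]|p].
- by split; [|rewrite ln_1].
- by split; [rewrite muln_gt0 n1_gt0 | rewrite mult_INR ln_mult //; apply: lt_0_INR; apply/ltP].
- rewrite mem_primes => /and3P[p_pr _ _]; have p_gt0 := prime_gt0 p_pr.
  split; first by rewrite expn_gt0 p_gt0.
  by rewrite INR_expn ln_pow //; apply: lt_0_INR; apply/ltP.
Qed.

Lemma ubound_gt (p : nat) (z : R) : INR p < z -> (p < ubound z)%N.
Proof.
move=> p_lt_z; have [up_gt _] := archimed z.
have : (Z.of_nat p < up z)%Z by apply: lt_IZR; rewrite -INR_IZR_INZ; lra.
by rewrite /ubound => ?; apply/ltP; lia.
Qed.

Lemma Rlt_boolP (x y : R) : reflect (x < y) (Rlt_bool x y).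
Proof. by rewrite /Rlt_bool; case: Rlt_dec => ?; constructor. Qed.

Lemma Rle_boolP (x y : R) : reflect (x <= y) (Rle_bool x y).
Proof. by rewrite /Rle_bool; case: Rle_dec => ?; constructor. Qed.

Lemma prime_dvd_Pz (p : nat) (z : R) : prime p -> INR p < z -> (p %| Pz z)%N.
Proof.
move=> p_pr p_lt_z; have p_in : p \in index_iota 0 (ubound z).
  by rewrite mem_index_iota ubound_gt.
rewrite /Pz (big_rem p) //= p_pr; case: Rlt_boolP => //= _.
exact: dvdn_mulr.
Qed.

Lemma sifted_prime_ge (a p : nat) (z : R) :
  coprime a (Pz z) -> prime p -> (p %| a)%N -> z <= INR p.
Proof.
move=> a_sifted p_pr p_dvd_a; apply: Rnot_lt_le => /(prime_dvd_Pz p_pr) p_dvd_Pz.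
have := coprime_dvdl p_dvd_a a_sifted.
by rewrite prime_coprime // p_dvd_Pz.
Qed.

Definition sieve_weight (y : R) (p : nat) : R := 1 - ln (INR p) / ln y.

Lemma INR_prime_gt1 (p : nat) : prime p -> 1 < INR p.
Proof. by move=> /prime_gt1 /ltP; apply: (lt_INR 1). Qed.

Lemma ln_prime_gt0 (p : nat) : prime p -> 0 < ln (INR p).
Proof. by move=> /INR_prime_gt1 p_gt1; rewrite -ln_1; apply: ln_increasing; lra. Qed.

Lemma Rdiv_le_l (a b c : R) : 0 < c -> a <= b * c -> a / c <= b.
Proof.
move=> c_gt0 a_le; apply: (Rmult_le_reg_r c) => //.
by rewrite /Rdiv Rmult_assoc Rinv_l ?Rmult_1_r; lra.
Qed.

Lemma Rdiv_ge_l (a b c : R) : 0 < c -> b * c <= a -> b <= a / c.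
Proof.
move=> c_gt0 a_ge; apply: (Rmult_le_reg_r c) => //.
by rewrite /Rdiv Rmult_assoc Rinv_l ?Rmult_1_r; lra.
Qed.

Lemma ln_le (x y : R) : 0 < x -> x <= y -> ln x <= ln y.
Proof. by move=> x_gt0 [x_lt_y|<-]; [left; apply: ln_increasing | right]. Qed.

Lemma sieve_weight_ge0 (y : R) (p : nat) : prime p -> INR p < y -> 0 <= sieve_weight y p.
Proof.
move=> p_pr p_lt_y; have p_gt1 := INR_prime_gt1 p_pr.
have lnp_lt : ln (INR p) < ln y by apply: ln_increasing; lra.
have lnp_gt0 := ln_prime_gt0 p_pr.
have : ln (INR p) / ln y <= 1 by apply: Rdiv_le_l; lra.
rewrite /sieve_weight; lra.
Qed.

Lemma sieve_weight_le0 (y : R) (p : nat) : prime p -> 1 < y -> y <= INR p -> sieve_weight y p <= 0.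
Proof.
move=> p_pr y_gt1 y_le_p; have lny_gt0 : 0 < ln y by rewrite -ln_1; apply: ln_increasing; lra.
have : 1 <= ln (INR p) / ln y by apply: Rdiv_ge_l; rewrite ?Rmult_1_l; [|apply: ln_le]; lra.
rewrite /sieve_weight; lra.
Qed.

Lemma sum_logn_sieve_weight (a : nat) (y : R) : (0 < a)%N -> ln y <> 0 ->
  \big[Rplus/R0]_(p <- primes a) (INR (logn p a) * sieve_weight y p)
    = INR (bigOmega a) - ln (INR a) / ln y.
Proof.
move=> a_gt0 lny_neq0; rewrite ln_nat_prime_decomp // /bigOmega INR_sum.
rewrite /sieve_weight; elim: (primes a) => [|p s IH]; rewrite ?big_nil ?big_cons.
  by field.
by rewrite IH; field.
Qed.

Lemma Rmult_INR_bool (x : R) (b : bool) : x * INR b = if b then x else R0.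
Proof. by case: b => /=; ring. Qed.

Lemma sum_primes_between_sifted_dvd (a : nat) (z y : R) (f : nat -> R) :
  (0 < a)%N -> coprime a (Pz z) ->
  sum_primes_between z y (fun p => f p * INR (p %| a)%N)
    = \big[Rplus/R0]_(p <- primes a | Rlt_bool (INR p) y) f p.
Proof.
move=> a_gt0 a_sifted; rewrite /sum_primes_between.
under eq_bigr => p _ do rewrite Rmult_INR_bool.
rewrite -big_mkcondr -big_filter -[RHS]big_filter.
apply: perm_big; apply: uniq_perm.
- by rewrite filter_uniq // iota_uniq.
- by rewrite filter_uniq // primes_uniq.
move=> p; rewrite !mem_filter mem_primes mem_index_iota a_gt0 /=.
apply/idP/idP => [/andP[/andP[/andP[/andP[-> _] ->] ->] _] //|].
case/and3P => p_lt_y p_pr p_dvd_a.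
rewrite p_pr p_dvd_a p_lt_y ubound_gt; last exact/Rlt_boolP.
rewrite !andbT; apply/Rle_boolP; exact: sifted_prime_ge a_sifted p_pr p_dvd_a.
Qed.

Lemma logn_eq1 (p a : nat) :
  (0 < a)%N -> prime p -> (p %| a)%N -> ~~ (p * p %| a)%N -> logn p a = 1%N.
Proof.
move=> a_gt0 p_pr p_dvd_a p2_ndvd_a; apply/eqP.
rewrite eqn_leq logn_gt0 mem_primes p_pr a_gt0 p_dvd_a !andbT leqNgt.
by apply/negP => logn_gt1; move/negP: p2_ndvd_a; apply; rewrite mulnn pfactor_dvdn.
Qed.

Section PointwiseBound.

Variables (k : nat) (k2 z y : R).
Hypotheses (k2_ge1 : 1 <= k2) (k2_lt : k2 < INR k + 1) (y_gt0 : 0 < y).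
Local Notation lam := (INR k + 1 - k2).

Lemma lam_le_sum_sieve_weight (a : nat) :
  (0 < a)%N -> coprime a (Pz z) -> (k < bigOmega a)%N -> ln (INR a) <= k2 * ln y ->
  (forall p, prime p -> z <= INR p -> INR p < y -> ~~ (p * p %| a)%N) ->
  lam <= \big[Rplus/R0]_(p <- primes a | Rlt_bool (INR p) y) sieve_weight y p.
Proof.
move=> a_gt0 a_sifted Omega_gt lna_le no_sq.
have a_gt1 : (1 < a)%N.
  rewrite ltn_neqAle a_gt0 andbT; apply: contraTneq Omega_gt => <-.
  by rewrite /bigOmega big_nil.
have lna_gt0 : 0 < ln (INR a).
  by rewrite -ln_1; apply: ln_increasing; [lra | apply: (lt_INR 1); apply/ltP].
have lny_gt0 : 0 < ln y.
  apply: Rnot_le_lt => lny_le0.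
  by have := Rmult_le_compat_l k2 _ _ ltac:(lra) lny_le0; lra.
have y_gt1 : 1 < y by apply: ln_lt_inv; rewrite ?ln_1; lra.
have weights_ge : \big[Rplus/R0]_(p <- primes a) (INR (logn p a) * sieve_weight y p)
    <= \big[Rplus/R0]_(p <- primes a | Rlt_bool (INR p) y) sieve_weight y p.
  rewrite [in X in _ <= X]big_mkcond big_seq [in X in _ <= X]big_seq.
  apply: big_Rle => p; rewrite mem_primes a_gt0 /= => /andP[p_pr p_dvd_a].
  case: Rlt_boolP => [p_lt_y | /Rnot_lt_le y_le_p].
    have z_le_p := sifted_prime_ge a_sifted p_pr p_dvd_a.
    by rewrite logn_eq1 ?no_sq //= Rmult_1_l; apply: Rle_refl.
  have := Rmult_le_compat_l _ _ _ (pos_INR (logn p a)) (sieve_weight_le0 p_pr y_gt1 y_le_p).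
  by rewrite Rmult_0_r.
apply: Rle_trans weights_ge; rewrite sum_logn_sieve_weight //; last lra.
have Omega_ge : INR k + 1 <= INR (bigOmega a) by rewrite -S_INR; apply: le_INR; apply/leP.
have : ln (INR a) / ln y <= k2 by apply: Rdiv_le_l.
lra.
Qed.

Lemma weighted_sieve_pointwise (a : nat) :
  (0 < a)%N -> ln (INR a) <= k2 * ln y ->
  lam * INR (coprime a (Pz z))
    - sum_primes_between z y
        (fun p => sieve_weight y p * INR (coprime a (Pz z) && (p %| a))%N)
  <= INR k * INR (bigOmega a <= k)%N
     + lam * sum_primes_between z y (fun p => INR (p * p %| a)%N).
Proof.
move=> a_gt0 lna_le; set S := sum_primes_between z y (fun p => INR _).
have S_ge0 : 0 <= S by apply: big_Rge0 => p _; exact: pos_INR.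
have lamS_ge0 : 0 <= lam * S by apply: Rmult_le_pos; lra.
have kOmega_ge0 : 0 <= INR k * INR (bigOmega a <= k)%N by apply: Rmult_le_pos; apply: pos_INR.
case: (boolP (coprime a (Pz z))) => [a_sifted | _] /=; last first.
  rewrite /sum_primes_between big1 => [|p _]; last by rewrite Rmult_0_r.
  lra.
rewrite sum_primes_between_sifted_dvd //.
have W_ge0 : 0 <= \big[Rplus/R0]_(p <- primes a | Rlt_bool (INR p) y) sieve_weight y p.
  rewrite big_seq_cond; apply: big_Rge0 => p /andP[].
  rewrite mem_primes => /andP[p_pr _] /Rlt_boolP; exact: sieve_weight_ge0.
case: (leqP (bigOmega a) k) => [_ | Omega_gt] /=; first lra.
case: (Rlt_le_dec S 1) => [S_lt1 | S_ge1]; last first.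
  by have := Rmult_le_compat_l lam _ _ ltac:(lra) S_ge1; lra.
suff : lam <= \big[Rplus/R0]_(p <- primes a | Rlt_bool (INR p) y) sieve_weight y p by lra.
apply: lam_le_sum_sieve_weight => // p p_pr z_le_p p_lt_y; apply/negP => p2_dvd_a.
have : INR (p * p %| a)%N <= S.
  rewrite /S /sum_primes_between; apply: (@big_Rle_term _ _ _ (fun q => INR (q * q %| a)%N)) => [|| q _].
  - by rewrite mem_index_iota ubound_gt.
  - by rewrite p_pr; apply/andP; split; [apply/Rle_boolP | apply/Rlt_boolP].
  - exact: pos_INR.
by rewrite p2_dvd_a /=; lra.
Qed.

Lemma weighted_sieve_sum (B : seq nat) :
  (forall a, a \in B -> (0 < a)%N /\ ln (INR a) <= k2 * ln y) ->
  lam * INR (Ssieve B z)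
    - sum_primes_between z y (fun p => sieve_weight y p * INR (Ssieve (multiples p B) z))
  <= INR k * INR (rk k B)
     + lam * sum_primes_between z y (fun p => INR (size (multiples (p * p) B))).
Proof.
move=> B_bounded.
have sifted_sum : sum_primes_between z y
      (fun p => sieve_weight y p * INR (Ssieve (multiples p B) z))
    = \big[Rplus/R0]_(a <- B) sum_primes_between z y
        (fun p => sieve_weight y p * INR (coprime a (Pz z) && (p %| a))%N).
  rewrite /sum_primes_between [RHS]exchange_big; apply: eq_bigr => p _.
  by rewrite /Ssieve /multiples count_filter INR_count big_distrr.
have square_sum : sum_primes_between z y (fun p => INR (size (multiples (p * p) B)))
    = \big[Rplus/R0]_(a <- B) sum_primes_between z y (fun p => INR (p * p %| a)%N).
  rewrite /sum_primes_between [RHS]exchange_big; apply: eq_bigr => p _.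
  by rewrite /multiples size_filter INR_count.
rewrite sifted_sum square_sum /Ssieve /rk !INR_count !big_distrr.
apply: big_Rle_diff => a /B_bounded [a_gt0 lna_le].
exact: weighted_sieve_pointwise.
Qed.

End PointwiseBound.

Theorem lemma3p6 (A : seq nat) (k : nat) (k1 k2 c delta : R) :
  uniq A -> A <> [::] -> all (fun a => (0 < a)%N) A ->
  (1 <= k)%N ->
  k1 >= k2 -> k2 >= 1 -> INR k + 1 > k2 ->
  c > 0 -> 0 < delta < 1 ->
  let X := (\max_(a <- A) a)%N in
  let z := Rpower (INR X) (1 / k1) in
  let y := Rpower (INR X) (1 / k2) in
  let lam := INR k + 1 - k2 in
  sum_primes_between z y (fun p => INR (size (multiples (p * p)%N A)))
     <= c * Rpower (INR (size A)) (1 - delta) ->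
  INR (rk k A) >=
     lam / INR k * INR (Ssieve A z)
     - 1 / INR k * sum_primes_between z y
         (fun p => (1 - ln (INR p) / ln y) * INR (Ssieve (multiples p A) z))
     - lam * c / INR k * Rpower (INR (size A)) (1 - delta).
Proof.
move=> _ _ A_pos k_ge1 _ k2_ge1 k2_lt _ _ X z y lam square_bound.
have y_gt0 : 0 < y by apply: exp_pos.
have A_bounded a : a \in A -> (0 < a)%N /\ ln (INR a) <= k2 * ln y.
  move=> a_in; have a_gt0 := allP A_pos a a_in; split => //.
  have a_le_X : (a <= X)%N by apply: leq_bigmax_seq.
  have : ln (INR a) <= ln (INR X).
    by apply: ln_le; [apply: lt_0_INR; apply/ltP | apply: le_INR; apply/leP].
  by rewrite /y ln_Rpower; have -> : k2 * (1 / k2 * ln (INR X)) = ln (INR X) by field; lra.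
have := @weighted_sieve_sum k k2 z y (Rge_le _ _ k2_ge1) k2_lt y_gt0 A A_bounded.
rewrite /sieve_weight -/lam => double_count.
have k_gt0 : 0 < INR k by apply: (lt_INR 0); apply/ltP.
have lam_gt0 : 0 < lam by rewrite /lam; lra.
have lam_square_bound := Rmult_le_compat_l lam _ _ (Rlt_le _ _ lam_gt0) square_bound.
set N := Rpower _ _ in lam_square_bound *.
set T := sum_primes_between z y (fun p => (_ - _) * _) in double_count *.
apply: Rle_ge; apply: (Rmult_le_reg_l (INR k)) => //.
have -> : INR k * (lam / INR k * INR (Ssieve A z) - 1 / INR k * T - lam * c / INR k * N)
    = lam * INR (Ssieve A z) - T - lam * (c * N) by field; lra.
lra.
Qed.
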